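(* Let $Q$ be a groupoid quantale with base locale $A$ and let $X$ be a stably supported $Q$-module with support $\varsigma_X:X\to A$. Then the map $A\to X$, $a\mapsto a\triangleright1_X$, is right adjoint to $\varsigma_X$. In particular $\varsigma_X$ preserves arbitrary joins, and the support of $X$ is unique.
   Context: Let $A$ be a locale. An involutive $A$-$A$-quantale $Q$ is a sup-lattice with commuting unital left and right $A$-actions $a\triangleright q$, $q\triangleleft a$, an associative join-preserving multiplication compatible with them ($(a\triangleright x)y=a\triangleright(xy)$, $(x\triangleleft a)y=x(a\triangleright y)$, $(xy)\triangleleft a=x(y\triangleleft a)$), and a join-preserving involution with $x^{**}=x$, $(xy)^*=y^*x^*$, $(a\triangleright x\triangleleft b)^*=b\triangleright x^*\triangleleft a$. A support is a sup-lattice homomorphism $\varsigma_Q:Q\to A$ with $\varsigma_Q(1_Q)=1_A$, $\varsigma_Q(x)\triangleright y\le xx^*y$, $\varsigma_Q(x)\triangleright x=x$; equivariant if $\varsigma_Q(a\triangleright x)=a\wedge\varsigma_Q(x)$. A groupoid quantale is such a $Q$ which is a frame with $(a\triangleright q)\wedge m=a\triangleright(q\wedge m)$, $m\wedge(q\triangleleft a)=(q\wedge m)\triangleleft a$, with an equivariant support and a frame homomorphism $\upsilon:Q\to A$ with $\upsilon(a\triangleright1_Q)=a=\upsilon(1_Q\triangleleft a)$, such that the right adjoint of $Q\otimes_AQ\to Q$ preserves joins, $\bigvee_{xy\le a}\upsilon(x)\triangleright y=a$ and $\upsilon(a)\triangleright1_Q=\bigvee_{xx^*\le a}x$. A $Q$-module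 is a locale $X$ with a left $Q$-module action $q\cdot x$ and a unital left $A$-module structure $a\triangleright x$ with $(a\triangleright q)\cdot x=a\triangleright(q\cdot x)$, $(q\triangleleft a)\cdot x=q\cdot(a\triangleright x)$, $a\triangleright(x\wedge y)=(a\triangleright x)\wedge y$. A pre-Hilbert $Q$-module has $\langle-,-\rangle:X\times X\to Q$ with $\langle q\cdot x,y\rangle=q\langle x,y\rangle$, $a\triangleright\langle x,1_X\rangle=\langle a\triangleright x,1_X\rangle$, $\langle\bigvee x_\alpha,y\rangle=\bigvee\langle x_\alpha,y\rangle$, $\langle x,y\rangle=\langle y,x\rangle^*$. A support on it is a monotone $\varsigma_X:X\to A$ with $\varsigma_X(1_X)=1_A$, $\varsigma_X(x)\triangleright1_X\le\langle x,x\rangle\cdot1_X$, $\varsigma_X(x)\triangleright x=x$; it is stable if $\varsigma_X(q\cdot x)\le\varsigma_Q(q)$ for all $q,x$. *)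

Unset Implicit Arguments.
Unset Strict Implicit.

Record CLat := {
  car :> Type;
  le : car -> car -> Prop;
  sup : (car -> Prop) -> car;
  le_refl : forall x, le x x;
  le_trans : forall x y z, le x y -> le y z -> le x z;
  le_antisym : forall x y, le x y -> le y x -> x = y;
  sup_ub : forall S x, S x -> le x (sup S);
  sup_least : forall S y, (forall x, S x -> le x y) -> le (sup S) y }.

Arguments le {c} _ _.
Arguments sup {c} _.

Definition top (L : CLat) : L := sup (fun _ => True).
Definition meet {L : CLat} (x y : L) : L := sup (fun z => le z x /\ le z y).

Definition img {T : Type} {L : Type} (S : T -> Prop) (f : T -> L) : L -> Prop :=
  fun y => exists t, S t /\ f t = y.

Definition is_frame (L : CLat) : Prop :=
  forall (a : L) (S : L -> Prop), meet a (sup S) = sup (img S (meet a)).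

Record Frame := { fr :> CLat; fr_distr : is_frame fr }.

Definition sl_hom {L M : CLat} (f : L -> M) : Prop :=
  forall S : L -> Prop, f (sup S) = sup (img S f).

Definition frame_hom {L M : CLat} (f : L -> M) : Prop :=
  sl_hom f /\ (forall x y, f (meet x y) = meet (f x) (f y)) /\ f (top L) = top M.

Unset Implicit Arguments.
(* unital left module over the locale A (a quantale with multiplication = meet) *)
Definition is_unital_lmodA (A : CLat) (L : CLat) (act : A -> L -> L) : Prop :=
  (forall a b x, act a (act b x) = act (meet a b) x) /\
  (forall x, act (top A) x = x) /\
  (forall (S : A -> Prop) x, act (sup S) x = sup (img S (fun a => act a x))) /\
  (forall a (T : L -> Prop), act a (sup T) = sup (img T (act a))).

Definition is_unital_rmodA (A : CLat) (L : CLat) (act : L -> A -> L) : Prop :=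
  (forall a b x, act (act x a) b = act x (meet a b)) /\
  (forall x, act x (top A) = x) /\
  (forall (S : A -> Prop) x, act x (sup S) = sup (img S (fun a => act x a))) /\
  (forall a (T : L -> Prop), act (sup T) a = sup (img T (fun x => act x a))).

Unset Implicit Arguments.
Record IAAQuantale (A : Frame) := {
  Qlat :> CLat;
  qla : A -> Qlat -> Qlat;
  qra : Qlat -> A -> Qlat;
  qmul : Qlat -> Qlat -> Qlat;
  qinv : Qlat -> Qlat;
  q_lmod : is_unital_lmodA A Qlat qla;
  q_rmod : is_unital_rmodA A Qlat qra;
  q_comm_act : forall a b x, qra (qla a x) b = qla a (qra x b);
  q_assoc : forall x y z, qmul (qmul x y) z = qmul x (qmul y z);
  q_mul_supl : forall (S : Qlat -> Prop) y, qmul (sup S) y = sup (img S (fun x => qmul x y));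
  q_mul_supr : forall x (S : Qlat -> Prop), qmul x (sup S) = sup (img S (qmul x));
  q_compat1 : forall a x y, qmul (qla a x) y = qla a (qmul x y);
  q_compat2 : forall a x y, qmul (qra x a) y = qmul x (qla a y);
  q_compat3 : forall a x y, qra (qmul x y) a = qmul x (qra y a);
  q_inv_sup : forall S : Qlat -> Prop, qinv (sup S) = sup (img S qinv);
  q_inv_inv : forall x, qinv (qinv x) = x;
  q_inv_mul : forall x y, qinv (qmul x y) = qmul (qinv y) (qinv x);
  q_inv_act : forall a b x, qinv (qra (qla a x) b) = qra (qla b (qinv x)) a }.

Arguments qla {A} _ _ _.
Arguments qra {A} _ _ _.
Arguments qmul {A} _ _ _.
Arguments qinv {A} _ _.

Definition is_Q_support {A : Frame} (Q : IAAQuantale A) (s : Q -> A) : Prop :=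
  sl_hom s /\ s (top Q) = top A /\
  (forall x y, le (qla Q (s x) y) (qmul Q (qmul Q x (qinv Q x)) y)) /\
  (forall x, qla Q (s x) x = x).

Definition equivariant {A : Frame} (Q : IAAQuantale A) (s : Q -> A) : Prop :=
  forall a x, s (qla Q a x) = meet a (s x).

(* Elements of the tensor product Q (x)_A Q of the right A-module Q and the
   left A-module Q are represented (as usual) by the "tensor ideals": subsets
   of Q x Q that are down-closed, closed under joins (including the empty
   join) in each variable, and balanced: (x<|a, y) in S <-> (x, a|>y) in S.
   They are ordered by inclusion; the join of a family of tensor ideals is the
   least tensor ideal containing their union. *)
Definition tens_ideal {A : Frame} (Q : IAAQuantale A) (S : Q -> Q -> Prop) : Prop :=
  (forall x y x' y', S x y -> le x' x -> le y' y -> S x' y') /\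
  (forall (T : Q -> Prop) y, (forall x, T x -> S x y) -> S (sup T) y) /\
  (forall x (T : Q -> Prop), (forall y, T y -> S x y) -> S x (sup T)) /\
  (forall x a y, S (qra Q x a) y <-> S x (qla Q a y)).

Definition tens_join {A : Frame} (Q : IAAQuantale A)
  (F : (Q -> Q -> Prop) -> Prop) : Q -> Q -> Prop :=
  fun x y => forall S, tens_ideal Q S ->
    (forall T, F T -> forall x' y', T x' y' -> S x' y') -> S x y.

(* The multiplication Q (x)_A Q -> Q sends a tensor ideal S to
   \/ {x y | (x,y) in S}; its right adjoint sends q to the tensor ideal
   {(x,y) | x y <= q}. *)
Definition mul_radj {A : Frame} (Q : IAAQuantale A) (q : Q) : Q -> Q -> Prop :=
  fun x y => le (qmul Q x y) q.

Definition mul_radj_preserves_joins {A : Frame} (Q : IAAQuantale A) : Prop :=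
  forall (P : Q -> Prop) x y,
    mul_radj Q (sup P) x y <->
    tens_join Q (fun T => exists q, P q /\ T = mul_radj Q q) x y.

Record GroupoidQuantale (A : Frame) := {
  gq :> IAAQuantale A;
  gq_frame : is_frame gq;
  gq_la_meet : forall (a : A) (q m : gq), meet (qla gq a q) m = qla gq a (meet q m);
  gq_ra_meet : forall (a : A) (q m : gq), meet m (qra gq q a) = qra gq (meet q m) a;
  gq_supp : gq -> A;
  gq_supp_ok : is_Q_support gq gq_supp;
  gq_supp_equiv : equivariant gq gq_supp;
  gq_ups : gq -> A;
  gq_ups_hom : frame_hom gq_ups;
  gq_ups_l : forall a : A, gq_ups (qla gq a (top gq)) = a;
  gq_ups_r : forall a : A, gq_ups (qra gq (top gq) a) = a;
  gq_tensor : mul_radj_preserves_joins gq;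
  gq_cond1 : forall a : gq,
      sup (fun z => exists x y, le (qmul gq x y) a /\ z = qla gq (gq_ups x) y) = a;
  gq_cond2 : forall a : gq,
      qla gq (gq_ups a) (top gq) = sup (fun x => le (qmul gq x (qinv gq x)) a) }.

Arguments gq_supp {A} _ _.

Record PreHilbertModule {A : Frame} (Q : IAAQuantale A) := {
  Xfr :> Frame;
  xq : Q -> Xfr -> Xfr;
  xa : A -> Xfr -> Xfr;
  inner : Xfr -> Xfr -> Q;
  x_qmod_mul : forall q r x, xq (qmul Q q r) x = xq q (xq r x);
  x_qmod_supl : forall (S : Q -> Prop) x, xq (sup S) x = sup (img S (fun q => xq q x));
  x_qmod_supr : forall q (T : Xfr -> Prop), xq q (sup T) = sup (img T (xq q));
  x_amod : is_unital_lmodA A Xfr xa;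
  x_compat1 : forall a q x, xq (qla Q a q) x = xa a (xq q x);
  x_compat2 : forall a q x, xq (qra Q q a) x = xq q (xa a x);
  x_compat3 : forall a x y, xa a (meet x y) = meet (xa a x) y;
  inner_q : forall q x y, inner (xq q x) y = qmul Q q (inner x y);
  inner_a : forall a x, qla Q a (inner x (top Xfr)) = inner (xa a x) (top Xfr);
  inner_sup : forall (S : Xfr -> Prop) y, inner (sup S) y = sup (img S (fun x => inner x y));
  inner_sym : forall x y, inner x y = qinv Q (inner y x) }.

Arguments xq {A Q} _ _ _.
Arguments xa {A Q} _ _ _.
Arguments inner {A Q} _ _ _.

Definition is_X_support {A : Frame} {Q : IAAQuantale A} (X : PreHilbertModule Q)
  (s : X -> A) : Prop :=
  (forall x y, le x y -> le (s x) (s y)) /\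
  s (top X) = top A /\
  (forall x, le (xa X (s x) (top X)) (xq X (inner X x x) (top X))) /\
  (forall x, xa X (s x) x = x).

Definition stable {A : Frame} {Q : IAAQuantale A} (sQ : Q -> A)
  (X : PreHilbertModule Q) (s : X -> A) : Prop :=
  forall q x, le (s (xq X q x)) (sQ q).


(* If [sX x <= a] then [x = sX x |> x <= a |> 1].  Conversely, the support axiom
   at [1_X] gives [1_X <= <1,1> . 1_X <= 1_Q . 1_X], hence
   [a |> 1_X <= (a |> 1_Q) . 1_X], and stability with equivariance yield
   [sX (a |> 1_X) <= sQ (a |> 1_Q) = a /\ sQ 1_Q <= a].  Join preservation and
   uniqueness are then general facts about left adjoints. *)

Definition adjunction {L M : CLat} (f : L -> M) (g : M -> L) : Prop :=
  forall x y, le (f x) y <-> le x (g y).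

Section LatticeFacts.

Variables L M : CLat.

Lemma le_top (x : L) : le x (top L).
Proof. apply sup_ub. exact I. Qed.

Lemma meet_le_l (x y : L) : le (meet x y) x.
Proof. apply sup_least. intros z [Hzx _]. exact Hzx. Qed.

Lemma sl_hom_monotone (f : L -> M) : sl_hom f -> forall x y, le x y -> le (f x) (f y).
Proof.
  intros Hf x y Hxy.
  assert (Hpair : sup (fun z => z = x \/ z = y) = y).
  { apply le_antisym.
    - apply sup_least. intros z [-> | ->]; [exact Hxy | apply le_refl].
    - apply sup_ub. right. reflexivity. }
  rewrite <- Hpair, Hf. apply sup_ub. exists x. split; [left |]; reflexivity.
Qed.

Lemma left_adjoint_monotone (f : L -> M) (g : M -> L) :
  adjunction f g -> forall x y, le x y -> le (f x) (f y).
Proof.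
  intros Hfg x y Hxy. apply Hfg.
  apply le_trans with y; [exact Hxy |]. apply Hfg, le_refl.
Qed.

Lemma left_adjoint_sl_hom (f : L -> M) (g : M -> L) : adjunction f g -> sl_hom f.
Proof.
  intros Hfg S. apply le_antisym.
  - apply Hfg, sup_least. intros x Hx. apply Hfg, sup_ub. exists x. split; auto.
  - apply sup_least. intros z [x [Hx <-]].
    apply (left_adjoint_monotone f g Hfg), sup_ub. exact Hx.
Qed.

Lemma left_adjoint_unique (f f' : L -> M) (g : M -> L) :
  adjunction f g -> adjunction f' g -> forall x, f' x = f x.
Proof.
  intros Hfg Hf'g x. apply le_antisym.
  - apply Hf'g, Hfg, le_refl.
  - apply Hfg, Hf'g, le_refl.
Qed.

End LatticeFacts.

Section SupportAdjunction.

Variables (A : Frame) (Q : IAAQuantale A) (X : PreHilbertModule Q).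

Lemma xa_monotone_r (a : A) (x y : X) : le x y -> le (xa X a x) (xa X a y).
Proof.
  apply sl_hom_monotone. intros T. apply (proj2 (proj2 (proj2 (x_amod _ X)))).
Qed.

Lemma xa_monotone_l (x : X) (a b : A) : le a b -> le (xa X a x) (xa X b x).
Proof.
  apply (sl_hom_monotone A X (fun c => xa X c x)).
  intros S. apply (proj1 (proj2 (proj2 (x_amod _ X)))).
Qed.

Lemma xq_monotone_l (x : X) (p q : Q) : le p q -> le (xq X p x) (xq X q x).
Proof.
  apply (sl_hom_monotone Q X (fun r => xq X r x)).
  intros S. apply x_qmod_supl.
Qed.

Variables (sQ : Q -> A) (sX : X -> A).
Hypothesis sQ_equiv : equivariant Q sQ.
Hypothesis sX_support : is_X_support X sX.
Hypothesis sX_stable : stable sQ X sX.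

Lemma top_le_qtop_act : le (top X) (xq X (top Q) (top X)).
Proof.
  destruct sX_support as [_ [Htop [Hinner _]]].
  pose proof (Hinner (top X)) as H1. rewrite Htop in H1.
  rewrite (proj1 (proj2 (x_amod _ X))) in H1.
  eapply le_trans; [exact H1 |]. apply xq_monotone_l, le_top.
Qed.

Lemma support_act_top_le (a : A) : le (sX (xa X a (top X))) a.
Proof.
  destruct sX_support as [Hmono _].
  apply le_trans with (sX (xq X (qla Q a (top Q)) (top X))).
  - apply Hmono. rewrite x_compat1. apply xa_monotone_r, top_le_qtop_act.
  - eapply le_trans; [apply sX_stable |]. rewrite sQ_equiv. apply meet_le_l.
Qed.

Lemma support_adjunction : adjunction sX (fun a => xa X a (top X)).
Proof.
  destruct sX_support as [Hmono [_ [_ Hfix]]].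
  intros x a. split; intro H.
  - rewrite <- (Hfix x). eapply le_trans.
    + apply xa_monotone_r, le_top.
    + apply xa_monotone_l. exact H.
  - apply le_trans with (sX (xa X a (top X))).
    + apply Hmono. exact H.
    + apply support_act_top_le.
Qed.

End SupportAdjunction.

Theorem lemma4p3 (A : Frame) (Q : GroupoidQuantale A) (X : PreHilbertModule Q)
  (sX : X -> A)
  (hsupp : is_X_support X sX) (hstab : stable (gq_supp Q) X sX) :
  (* a |-> a |> 1_X is right adjoint to sX *)
  (forall (x : X) (a : A), le (sX x) a <-> le x (xa X a (top X))) /\
  (* sX preserves arbitrary joins *)
  (forall S : X -> Prop, sX (sup S) = sup (img S sX)) /\
  (* uniqueness of the (stable) support *)
  (forall s' : X -> A, is_X_support X s' -> stable (gq_supp Q) X s' ->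
     forall x, s' x = sX x).
Proof.
  pose proof (support_adjunction A Q X _ sX (gq_supp_equiv A Q) hsupp hstab) as Hadj.
  split; [exact Hadj |]. split.
  - exact (left_adjoint_sl_hom X A sX _ Hadj).
  - intros s' hs' hst'.
    exact (left_adjoint_unique X A sX s' _ Hadj
             (support_adjunction A Q X _ s' (gq_supp_equiv A Q) hs' hst')).
Qed.
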